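(* Let $\{A^i\}_{i=1}^N$ be complex $2n\times2n$ matrices. Suppose there are unitaries $W,\tilde W\in\mathrm U(2n)$ and tuples $\{B^i\}_i,\{\tilde B^i\}_i$ of complex $n\times n$ matrices such that $A^i=W(\sigma_x^{|i|}\otimes B^i)W^\dagger=\tilde W(\sigma_x^{|i|}\otimes\tilde B^i)\tilde W^\dagger$ for all $i$, and such that for each of the tuples $\{B^i\}$ and $\{\tilde B^i\}$ both the span of all products of even total parity (products $B^{i_1}\cdots B^{i_l}$ with $l\in\mathbb N$ arbitrary and $\sum_k|i_k|$ even) and the span of all products of odd total parity equal $\mathrm M_n(\mathbb C)$. Then $\tilde W(\sigma_x\otimes1_n)\tilde W^\dagger=\pm\,W(\sigma_x\otimes1_n)W^\dagger$.
   Context: $i\mapsto|i|\in\{0,1\}$ is a fixed parity function on $\{1,\dots,N\}$; $\sigma_x$ is the Pauli $x$-matrix. The matrix $u=W(\sigma_x\otimes1_n)W^\dagger$ is called the Wall matrix of the graded irreducible fMPS $\{A^i\}$ with Wall invariant $(-)$. *)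

From mathcomp Require Import all_boot all_order all_algebra.
From mathcomp Require Export mxtens.
From mathcomp Require spectral.
Set Implicit Arguments. Unset Strict Implicit. Unset Printing Implicit Defensive.
Import Order.TTheory GRing.Theory Num.Theory.
Local Open Scope ring_scope.

(* C is an arbitrary numClosedFieldType (e.g. the complex numbers), with
   complex conjugation Num.conj. *)

Definition adjmx {C : numClosedFieldType} {m n : nat} (A : 'M[C]_(m, n)) : 'M[C]_(n, m) :=
  (map_mx Num.conj A)^T.

(* Unitarity: we use the library notion spectral.unitarymx
   (X *m X ^t* == 1%:M), which for square matrices is U U^dagger = 1. *)

Definition sigma_x {C : numClosedFieldType} : 'M[C]_2 :=
  \matrix_(i < 2, j < 2) (i != j)%:R.

Definition sigma_x_pow {C : numClosedFieldType} (b : bool) : 'M[C]_2 :=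
  if b then sigma_x else 1%:M.

Definition word_parity {N : nat} (par : 'I_N -> bool) (w : seq 'I_N) : bool :=
  odd (count par w).

Definition word_prod {C : numClosedFieldType} {N n : nat}
  (B : 'I_N -> 'M[C]_n) (w : seq 'I_N) : 'M[C]_n :=
  foldr (fun i M => B i *m M) 1%:M w.

(* The linear span of all products of total parity p equals M_n(C):
   every matrix is a finite linear combination of such products. *)
Definition parity_span_full {C : numClosedFieldType} {N n : nat}
  (par : 'I_N -> bool) (B : 'I_N -> 'M[C]_n) (p : bool) : Prop :=
  forall M : 'M[C]_n, exists cw : seq (C * seq 'I_N),
    all (fun x => word_parity par x.2 == p) cw /\
    M = \sum_(x <- cw) x.1 *: word_prod B x.2.

From mathcomp Require Import all_boot all_order all_algebra.
Import GRing.Theory Num.Theory.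
Local Open Scope ring_scope.

(* Let u and u~ be the Wall matrices of W and W~. As sigma_x commutes with
   every sigma_x^b, u~ commutes with every A^i and hence with every word in
   the A^i. Writing 1 as a combination of odd B~-words and reading the same
   combination of A-words through W gives u~ = W (sigma_x (x) K) W^dagger for a
   combination K of B-words. The even A-words are the W (1 (x) M) W^dagger,
   with M ranging over all of M_n by fullness of the even B-span; commuting with
   them forces K to be central, i.e. K = c 1, so u~ = c u, and u~^2 = u^2 = 1
   gives c = +-1. *)

Section Unitary.
Context {C : numClosedFieldType} {k : nat} {W : 'M[C]_k}.
Hypothesis W_unitary : W \is spectral.unitarymx.

Lemma unitary_mul_adjmx : W *m adjmx W = 1%:M.
Proof. by move/spectral.unitarymxP: W_unitary; rewrite /adjmx map_trmx. Qed.

Lemma unitary_adjmx_mul : adjmx W *m W = 1%:M.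
Proof. exact/mulmx1C/unitary_mul_adjmx. Qed.

Lemma unitary_conj_mul (X Y : 'M[C]_k) :
  W *m X *m adjmx W *m (W *m Y *m adjmx W) = W *m (X *m Y) *m adjmx W.
Proof. by rewrite !mulmxA -[W *m X *m _ *m W]mulmxA unitary_adjmx_mul mulmx1. Qed.

Lemma unitary_conj_inj (X Y : 'M[C]_k) :
  W *m X *m adjmx W = W *m Y *m adjmx W -> X = Y.
Proof.
move/(congr1 (fun Z => adjmx W *m Z *m W)).
by rewrite !mulmxA unitary_adjmx_mul !mul1mx -!mulmxA unitary_adjmx_mul !mulmx1.
Qed.

End Unitary.

Section Matrices.
Context {C : numClosedFieldType}.

Lemma tensmxDr a b c d (S : 'M[C]_(a, b)) (M1 M2 : 'M[C]_(c, d)) :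
  S *t (M1 + M2) = S *t M1 + S *t M2.
Proof. by apply/matrixP=> i j; rewrite !mxE mulrDr. Qed.

Lemma tensmxZr a b c d (S : 'M[C]_(a, b)) (x : C) (M : 'M[C]_(c, d)) :
  S *t (x *: M) = x *: (S *t M).
Proof. by apply/matrixP=> i j; rewrite !mxE mulrCA. Qed.

Lemma tens1mx1 a b : (1%:M : 'M[C]_a) *t (1%:M : 'M[C]_b) = 1%:M.
Proof.
apply/matrixP=> i j.
case: (mxtens_indexP i) => i0 i1; case: (mxtens_indexP j) => j0 j1.
rewrite tensmxE !mxE (inj_eq (can_inj (@mxtens_indexK a b))) xpair_eqE.
by case: (i0 == j0); case: (i1 == j1); rewrite ?mulr1 ?mulr0 ?mul0r.
Qed.

Lemma sigma_x_tens_inj n (X Y : 'M[C]_n) : sigma_x *t X = sigma_x *t Y -> X = Y.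
Proof.
move=> eqXY; apply/matrixP=> i j.
have := congr1 (fun Z : 'M[C]_(2 * n) =>
  Z (mxtens_index ((0 : 'I_2), i)) (mxtens_index ((1 : 'I_2), j))) eqXY.
by rewrite /= !tensmxE !mxE /= !mul1r.
Qed.

Lemma sigma_x_sqr : (sigma_x : 'M[C]_2) *m sigma_x = 1%:M.
Proof.
apply/matrixP=> i j; rewrite !mxE big_ord_recr big_ord1 /= !mxE.
by case: i => [[|[|//]] ?]; case: j => [[|[|//]] ?]; rewrite /= ?mulr0 ?mulr1 ?addr0 ?add0r.
Qed.

Lemma sigma_x_pow_mul p q :
  (sigma_x_pow p : 'M[C]_2) *m sigma_x_pow q = sigma_x_pow (p (+) q).
Proof. by case: p; case: q; rewrite /= ?mul1mx ?mulmx1 ?sigma_x_sqr. Qed.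

Lemma comm_sigma_x_pow q : comm_mx (sigma_x : 'M[C]_2) (sigma_x_pow q).
Proof. by case: q; rewrite /comm_mx /= ?mul1mx ?mulmx1. Qed.

Lemma scalemx1_inj k (a b : C) : a *: (1%:M : 'M[C]_k.+1) = b *: 1%:M -> a = b.
Proof. by rewrite !scalemx1 => /matrixP/(_ 0 0); rewrite !mxE eqxx !mulr1n. Qed.

Lemma mulmx_deltaE k (K : 'M[C]_k) (i j a b : 'I_k) :
  (K *m delta_mx i j) a b = K a i * (j == b)%:R.
Proof.
rewrite mxE (bigD1 i) //= big1 ?addr0 => [|l /negbTE nl]; rewrite !mxE ?eqxx ?nl //=;
  [by rewrite eq_sym | by rewrite mulr0].
Qed.

Lemma delta_mulmxE k (K : 'M[C]_k) (i j a b : 'I_k) :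
  (delta_mx i j *m K) a b = (a == i)%:R * K j b.
Proof.
rewrite mxE (bigD1 j) //= big1 ?addr0 => [|l /negbTE nl]; rewrite !mxE ?eqxx ?nl //=;
  [by rewrite andbT | by rewrite andbF mul0r].
Qed.

(* Comparing K e_xx with e_xx K at (x, y) shows K is diagonal, and K e_0x with
   e_0x K at (0, x) that its diagonal is constant. *)
Lemma comm_mx_all_scalar {k} {K : 'M[C]_k.+1} :
  (forall M, comm_mx K M) -> K = (K 0 0)%:M.
Proof.
move=> commK; apply/matrixP=> x y; rewrite mxE.
have := congr1 (fun M : 'M[C]_k.+1 => M x y) (commK (delta_mx x x)).
rewrite mulmx_deltaE delta_mulmxE eqxx mul1r => <-.
have := congr1 (fun M : 'M[C]_k.+1 => M 0 x) (commK (delta_mx 0 x)).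
by rewrite mulmx_deltaE delta_mulmxE !eqxx mul1r mulr1 => ->; rewrite mulr_natr.
Qed.

End Matrices.

Section Words.
Context {C : numClosedFieldType} {N : nat}.

Definition word_comb {k} (A : 'I_N -> 'M[C]_k) (cw : seq (C * seq 'I_N)) : 'M[C]_k :=
  \sum_(x <- cw) x.1 *: word_prod A x.2.

Lemma word_parity_cons (par : 'I_N -> bool) i w :
  word_parity par (i :: w) = par i (+) word_parity par w.
Proof. by rewrite /word_parity /= oddD oddb. Qed.

Lemma comm_mx_word_prod k (X : 'M[C]_k) (A : 'I_N -> 'M[C]_k) w :
  (forall i, comm_mx X (A i)) -> comm_mx X (word_prod A w).
Proof.
move=> commXA; elim: w => [|i w IHw] /=; first exact: comm_mx1.
exact: comm_mxM (commXA i) IHw.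
Qed.

Lemma comm_mx_word_comb k (X : 'M[C]_k) (A : 'I_N -> 'M[C]_k) cw :
  (forall w, comm_mx X (word_prod A w)) -> comm_mx X (word_comb A cw).
Proof.
move=> commXw; apply: comm_mx_sum => x _.
by rewrite /comm_mx -scalemxAr -scalemxAl commXw.
Qed.

Lemma word_prod_tens n (par : 'I_N -> bool) (B : 'I_N -> 'M[C]_n) w :
  word_prod (fun i => sigma_x_pow (par i) *t B i) w =
  sigma_x_pow (word_parity par w) *t word_prod B w.
Proof.
elim: w => [|i w IHw]; first by rewrite /= tens1mx1.
by rewrite [LHS]/= IHw tensmx_mul sigma_x_pow_mul -word_parity_cons.
Qed.

Lemma word_comb_tens {n} (B : 'I_N -> 'M[C]_n) {par : 'I_N -> bool} {p cw} :
  all (fun x => word_parity par x.2 == p) cw ->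
  word_comb (fun i => sigma_x_pow (par i) *t B i) cw =
  sigma_x_pow p *t word_comb B cw.
Proof.
rewrite /word_comb; elim: cw => [|x cw IHcw] /=; first by rewrite !big_nil tensmx0.
case/andP=> /eqP parx /IHcw {}IHcw.
by rewrite !big_cons tensmxDr tensmxZr IHcw word_prod_tens parx.
Qed.

Section Conjugation.
Context {k : nat} {W : 'M[C]_k}.
Hypothesis W_unitary : W \is spectral.unitarymx.

Lemma word_prod_conj {A A' : 'I_N -> 'M[C]_k} {w} :
  (forall i, A i = W *m A' i *m adjmx W) ->
  word_prod A w = W *m word_prod A' w *m adjmx W.
Proof.
move=> defA; elim: w => [|i w IHw] /=.
  by rewrite mulmx1 unitary_mul_adjmx.
by rewrite IHw defA unitary_conj_mul.
Qed.

Lemma word_comb_conj {A A' : 'I_N -> 'M[C]_k} {cw} :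
  (forall i, A i = W *m A' i *m adjmx W) ->
  word_comb A cw = W *m word_comb A' cw *m adjmx W.
Proof.
move=> defA; rewrite /word_comb mulmx_sumr mulmx_suml; apply: eq_bigr => x _.
by rewrite (word_prod_conj defA) -scalemxAr -scalemxAl.
Qed.

End Conjugation.
End Words.

Section WallMatrix.
Context {C : numClosedFieldType}.

Definition wall_mx {n} (W : 'M[C]_(2 * n)) : 'M[C]_(2 * n) :=
  W *m (sigma_x *t 1%:M) *m adjmx W.

Section Conjugation.
Context {n : nat} {W : 'M[C]_(2 * n)}.
Hypothesis W_unitary : W \is spectral.unitarymx.

Lemma wall_mx_sqr : wall_mx W *m wall_mx W = 1%:M.
Proof.
rewrite /wall_mx unitary_conj_mul // tensmx_mul sigma_x_sqr mulmx1 tens1mx1.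
by rewrite mulmx1 unitary_mul_adjmx.
Qed.

Lemma comm_conj_sigma_x_tens (K M : 'M[C]_n) :
  comm_mx (W *m (sigma_x *t K) *m adjmx W) (W *m (1%:M *t M) *m adjmx W) ->
  comm_mx K M.
Proof.
rewrite /comm_mx !unitary_conj_mul // !tensmx_mul mulmx1 mul1mx.
by move/(unitary_conj_inj W_unitary)/sigma_x_tens_inj.
Qed.

Lemma comm_wall_mx_word_prod {N} {par : 'I_N -> bool}
    {A : 'I_N -> 'M[C]_(2 * n)} {B : 'I_N -> 'M[C]_n} w :
  (forall i, A i = W *m (sigma_x_pow (par i) *t B i) *m adjmx W) ->
  comm_mx (wall_mx W) (word_prod A w).
Proof.
move=> defA; apply: comm_mx_word_prod => i.
by rewrite defA /comm_mx !unitary_conj_mul // !tensmx_mul mulmx1 mul1mx comm_sigma_x_pow.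
Qed.

End Conjugation.
End WallMatrix.

Theorem mainTheorem8 (C : numClosedFieldType) (N n : nat) (par : 'I_N -> bool)
    (A : 'I_N -> 'M[C]_(2 * n)) (W Wt : 'M[C]_(2 * n))
    (B Bt : 'I_N -> 'M[C]_n) :
  W \is spectral.unitarymx -> Wt \is spectral.unitarymx ->
  (forall i, A i = W *m (sigma_x_pow (par i) *t B i) *m adjmx W) ->
  (forall i, A i = Wt *m (sigma_x_pow (par i) *t Bt i) *m adjmx Wt) ->
  parity_span_full par B false -> parity_span_full par B true ->
  parity_span_full par Bt false -> parity_span_full par Bt true ->
  let u := W *m (sigma_x *t (1%:M : 'M[C]_n)) *m adjmx W in
  Wt *m (sigma_x *t (1%:M : 'M[C]_n)) *m adjmx Wt = u \/
  Wt *m (sigma_x *t (1%:M : 'M[C]_n)) *m adjmx Wt = - u.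
Proof.
move=> UW UWt defA defAt B_even _ _ Bt_odd u.
case: n => [|n] in A W Wt B Bt UW UWt defA defAt B_even Bt_odd u *.
  by left; apply/matrixP=> -[].
set ut := Wt *m _ *m adjmx Wt.
have [cw [odd_cw one_cw]] := Bt_odd 1%:M.
have ut_odd : ut = W *m (sigma_x *t word_comb B cw) *m adjmx W.
  rewrite /ut [X in _ *t X]one_cw -[sigma_x *t _](word_comb_tens Bt odd_cw).
  by rewrite -(word_comb_conj UWt defAt) (word_comb_conj UW defA) (word_comb_tens B odd_cw).
set K := word_comb B cw in ut_odd.
have K_central : forall M, comm_mx K M.
  move=> M; have [dw [even_dw M_dw]] := B_even M.
  apply: (comm_conj_sigma_x_tens UW); rewrite -ut_odd.
  rewrite [X in _ *t X]M_dw -[1%:M *t _](word_comb_tens B even_dw) -(word_comb_conj UW defA).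
  by apply: comm_mx_word_comb => w; apply: (comm_wall_mx_word_prod UWt w defAt).
have ut_scaled : ut = K 0 0 *: u.
  by rewrite ut_odd {1}(comm_mx_all_scalar K_central) -scalemx1 tensmxZr -scalemxAr -scalemxAl.
have ut_sqr : ut *m ut = 1%:M := wall_mx_sqr UWt.
have u_sqr : u *m u = 1%:M := wall_mx_sqr UW.
have : 1 *: 1%:M = K 0 0 ^+ 2 *: (1%:M : 'M_(2 * n.+1)).
  by rewrite scale1r -{1}ut_sqr ut_scaled -scalemxAr -scalemxAl u_sqr scalerA expr2.
move/scalemx1_inj/esym/eqP; rewrite sqrf_eq1 => /orP[|] /eqP c_eq.
  by left; rewrite -/ut ut_scaled c_eq scale1r.
by right; rewrite -/ut ut_scaled c_eq scaleN1r.
Qed.
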